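(* Let $m\geq 2$ and $2\leq n\leq m+1$ be integers, let $T_n$ be any tree with $n$ vertices and let $\overline{K_m}$ be the edgeless graph on $m$ vertices. Then $\chi_L(T_n\odot\overline{K_m})=m+1$.
   Context: All graphs are finite and simple. A $k$-coloring of a connected graph $G$ is a map $c:V(G)\to\{1,\dots,k\}$ with $c(u)\neq c(v)$ for adjacent $u,v$; it induces the partition $\Pi=\{C_1,\dots,C_k\}$ into color classes $C_i=c^{-1}(i)$. The color code of $v$ is $c_\Pi(v)=(d(v,C_1),\dots,d(v,C_k))$ with $d(v,C_i)=\min\{d(v,x): x\in C_i\}$ (graph distance). $c$ is a locating coloring if distinct vertices have distinct color codes; the locating-chromatic number $\chi_L(G)$ is the least $k$ for which a locating $k$-coloring exists. The corona product $G\odot H$ of a graph $G$ with vertex set $\{a_1,\dots,a_n\}$ and a graph $H$ is obtained from one copy of $G$ and $n$ disjoint copies of $H$ by joining $a_i$ to every vertex of the $i$-th copy of $H$. *)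

From mathcomp Require Import all_boot.
Set Implicit Arguments. Unset Strict Implicit. Unset Printing Implicit Defensive.

Definition simple_graph (V : finType) (e : rel V) : Prop :=
  symmetric e /\ irreflexive e.

Definition connected_graph (V : finType) (e : rel V) : Prop :=
  forall x y : V, connect e x y.

Definition is_tree (V : finType) (e : rel V) : Prop :=
  simple_graph e /\ connected_graph e /\
  ~ (exists s : seq V, [/\ uniq s, 2 < size s & cycle e s]).

Fixpoint ball (V : finType) (e : rel V) (k : nat) (x : V) : {set V} :=
  match k with
  | 0 => [set x]
  | k'.+1 => ball e k' x :|: [set y | [exists z in ball e k' x, e z y]]
  end.

(* Graph distance d(x,y): least k with y within k steps of x.
   (In a connected graph on #|V| vertices it is < #|V|; the fallback
   value #|V| is never used for connected graphs.) *)
Definition dist (V : finType) (e : rel V) (x y : V) : nat :=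
  find (fun k => y \in ball e k x) (iota 0 #|V|).

Definition dist_set (V : finType) (e : rel V) (x : V) (C : {set V}) : nat :=
  \big[minn/#|V|]_(y in C) dist e x y.

Definition color_class (V : finType) (k : nat) (c : V -> 'I_k) (i : 'I_k)
  : {set V} := [set v | c v == i].

Definition proper_coloring (V : finType) (e : rel V) (k : nat) (c : V -> 'I_k)
  : Prop :=
  (forall u v, e u v -> c u != c v) /\ (forall i : 'I_k, exists v, c v = i).

Definition color_code (V : finType) (e : rel V) (k : nat) (c : V -> 'I_k)
  (v : V) : 'I_k -> nat := fun i => dist_set e v (color_class c i).

Definition locating_coloring (V : finType) (e : rel V) (k : nat)
  (c : V -> 'I_k) : Prop :=
  proper_coloring e c /\
  (forall u v, (forall i, color_code e c u i = color_code e c v i) -> u = v).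

Definition has_locating_coloring (V : finType) (e : rel V) (k : nat) : Prop :=
  exists c : V -> 'I_k, locating_coloring e c.

Definition locating_chromatic_number_is (V : finType) (e : rel V) (k : nat)
  : Prop :=
  has_locating_coloring e k /\
  (forall k', has_locating_coloring e k' -> k <= k').

(* Corona product G (.) H: vertices VG + VG*VH; inl a = vertex a_i of G,
   inr (a,h) = vertex h of the copy of H attached to a. *)
Definition corona (VG VH : finType) (g : rel VG) (h : rel VH)
  : rel (VG + (VG * VH))%type :=
  fun x y =>
    match x, y with
    | inl a, inl b => g a b
    | inl a, inr (b, _) => a == b
    | inr (a, _), inl b => a == b
    | inr (a, u), inr (b, w) => (a == b) && h u w
    end.

Definition edgeless (m : nat) : rel 'I_m := fun _ _ => false.

From mathcomp Require Import all_boot perm zify.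
Set Implicit Arguments. Unset Strict Implicit. Unset Printing Implicit Defensive.

(* Lower bound: two leaves attached to the same tree vertex a are twins,
   so swapping them is a graph automorphism; if they had the same color it
   would preserve every color class and hence give them the same color
   code.  So the m leaves of a, and a itself, get m + 1 distinct colors.
   Upper bound: color tree vertex a with a (possible as n <= m + 1) and its
   leaves with the m other colors.  A vertex is then located by its own
   color together with the set of colors at distance <= 1: all m + 1
   colors for a tree vertex, but only its own color and that of its support
   vertex for a leaf, a proper subset since m + 1 >= 3. *)

Lemma leq_bigmin (I : finType) (P : pred I) (F : I -> nat) N k :
  (\big[minn/N]_(i | P i) F i <= k) = (N <= k) || [exists i, P i && (F i <= k)].
Proof.
have leq_bigmin_seq r : (\big[minn/N]_(i <- r | P i) F i <= k) =
    (N <= k) || has (fun i => P i && (F i <= k)) r.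
  elim: r => [|i r IH]; first by rewrite big_nil orbF.
  by rewrite big_cons /=; case: (P i); rewrite //= geq_min IH orbCA.
rewrite leq_bigmin_seq; congr (_ || _).
by apply/hasP/existsP => [[i _ Hi]|[i Hi]]; exists i; rewrite ?mem_index_enum.
Qed.

Lemma eq_leq_below (a b N : nat) : a <= N -> b <= N ->
  (forall k, k < N -> (a <= k) = (b <= k)) -> a = b.
Proof.
move=> aN bN ab; case: (ltngtP a b) => // [lt_ab|lt_ba].
  by move: (ab a (leq_trans lt_ab bN)); rewrite leqnn leqNgt lt_ab.
by move: (ab b (leq_trans lt_ba aN)); rewrite leqnn leqNgt lt_ba.
Qed.

Lemma exists_ord_neq2 k (x y : 'I_k) : 2 < k -> exists l, (l != x) && (l != y).
Proof.
move=> k_gt2; have : 0 < #|~: [set x; y]|.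
  by have := cardsC [set x; y]; rewrite cards2 card_ord; case: (x != y) => /=; lia.
by move=> /card_gt0P[l]; rewrite !inE negb_or; exists l.
Qed.

Section Distance.
Variables (V : finType) (e : rel V).

Lemma ball_monotone k l x : k <= l -> ball e k x \subset ball e l x.
Proof.
move=> /subnKC <-; elim: (l - k) => [|d IH]; first by rewrite addn0.
by rewrite addnS (subset_trans IH) //= subsetUl.
Qed.

Lemma ball1 x y : (y \in ball e 1 x) = (y == x) || e x y.
Proof.
rewrite /= !inE; congr (_ || _).
by apply/existsP/idP => [[z /andP[/[!inE] /eqP -> //]]|Exy]; exists x; rewrite inE eqxx.
Qed.

Lemma leq_dist_ball k x y : k < #|V| -> (dist e x y <= k) = (y \in ball e k x).
Proof.
move=> kV; rewrite /dist; apply/idP/idP => [Hd|Hy].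
  have Hhas : has (fun l => y \in ball e l x) (iota 0 #|V|).
    by rewrite has_find size_iota (leq_ltn_trans Hd).
  move: (nth_find 0 Hhas); rewrite nth_iota ?add0n ?(leq_ltn_trans Hd) //.
  exact: (subsetP (ball_monotone _ Hd)).
rewrite leqNgt; apply/negP => /(before_find 0).
by rewrite nth_iota // add0n Hy.
Qed.

Lemma leq_color_code k (c : V -> 'I_k) x i l : l < #|V| ->
  (color_code e c x i <= l) = [exists y in ball e l x, c y == i].
Proof.
move=> lV; rewrite /color_code /dist_set leq_bigmin leqNgt lV /=.
apply: eq_existsb => y; rewrite inE andbC leq_dist_ball //.
Qed.

Lemma color_code_le_card k (c : V -> 'I_k) x i : color_code e c x i <= #|V|.
Proof. by rewrite /color_code /dist_set leq_bigmin leqnn. Qed.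

Lemma color_code_le0 k (c : V -> 'I_k) x i : (color_code e c x i <= 0) = (c x == i).
Proof.
rewrite leq_color_code; last by apply/card_gt0P; exists x.
by apply/existsP/idP => [[y /andP[/[!inE] /eqP ->]]|Hx] //; exists x; rewrite inE eqxx.
Qed.

Section Automorphism.
Variable s : {perm V}.
Hypothesis s_edge : forall x y, e (s x) (s y) = e x y.

Lemma mem_ball_perm k x y : (s y \in ball e k (s x)) = (y \in ball e k x).
Proof.
elim: k y => [|k IH] y /=; first by rewrite !inE (inj_eq perm_inj).
rewrite !inE IH; congr (_ || _); apply/existsP/existsP => -[z /andP[Hz Ez]].
  by exists (s^-1 z)%g; rewrite -IH permKV Hz -s_edge permKV.
by exists (s z); rewrite IH Hz s_edge.
Qed.

Lemma color_code_perm k (c : V -> 'I_k) x i : (forall y, c (s y) = c y) ->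
  color_code e c (s x) i = color_code e c x i.
Proof.
move=> cs; apply: (eq_leq_below (color_code_le_card _ _ _)) => [|l lV].
  exact: color_code_le_card.
rewrite !leq_color_code //; apply/existsP/existsP => -[y /andP[Hy cy]].
  by exists (s^-1 y)%g; rewrite -mem_ball_perm -cs !permKV Hy.
by exists (s y); rewrite mem_ball_perm cs Hy.
Qed.
End Automorphism.

Lemma tperm_edge u v : e u =1 e v -> (forall y, e y u = e y v) ->
  forall x y, e (tperm u v x) (tperm u v y) = e x y.
Proof.
move=> Eu Eu' x y.
have El z w : e (tperm u v z) w = e z w by case: tpermP => // ->.
have Er z w : e z (tperm u v w) = e z w by case: tpermP => // ->.
by rewrite El Er.
Qed.

Lemma locating_twins k (c : V -> 'I_k) u v : locating_coloring e c ->
  e u =1 e v -> (forall y, e y u = e y v) -> c u = c v -> u = v.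
Proof.
move=> [_ loc] Eu Eu' cuv; apply: loc => i.
rewrite -(tpermL u v) color_code_perm //; first exact: tperm_edge.
by move=> y; case: tpermP => [->|->|].
Qed.
End Distance.

Section Corona.
Variables (n m : nat) (t : rel 'I_n).
Local Notation V := ('I_n + 'I_n * 'I_m)%type.
Local Notation e := (corona t (@edgeless m)).

Lemma corona_edge_leafl a j (y : V) : e (inr (a, j)) y = (y == inl a).
Proof. by case: y => [b|[b w]] /=; rewrite ?andbF // eq_sym. Qed.

Lemma corona_edge_leafr a j (y : V) : e y (inr (a, j)) = (y == inl a).
Proof. by case: y => [b|[b w]] /=; rewrite ?andbF. Qed.

Lemma locating_corona_ge k (c : V -> 'I_k) (a : 'I_n) :
  locating_coloring e c -> m.+1 <= k.
Proof.
move=> loc; have [[proper _] _] := loc.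
pose f (j : option 'I_m) := if j is Some j then c (inr (a, j)) else c (inl a).
suff /leq_card : injective f by rewrite card_option !card_ord.
have c_leaf j : c (inl a) != c (inr (a, j)) by apply: proper; rewrite /= eqxx.
case=> [j|] [j'|] //= cjj'; last 2 first.
- by move: (c_leaf j); rewrite cjj' eqxx.
- by move: (c_leaf j'); rewrite cjj' eqxx.
have /= [->] // : inr (a, j) = inr (a, j') :> V.
by apply: (locating_twins loc _ _ cjj') => y;
  rewrite ?corona_edge_leafl ?corona_edge_leafr.
Qed.

Lemma card_corona_gt1 (a : 'I_n) : 1 < m -> 1 < #|{: V}|.
Proof. by rewrite card_sum card_prod !card_ord; have := ltn_ord a; nia. Qed.

Section Coloring.
Hypotheses (n_le : n <= m.+1) (m_gt1 : 1 < m) (t_irr : irreflexive t).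
Variable a0 : 'I_n.

Definition tree_color (a : 'I_n) : 'I_m.+1 := widen_ord n_le a.

Definition corona_color (x : V) : 'I_m.+1 :=
  match x with inl a => tree_color a | inr (a, j) => lift (tree_color a) j end.

Lemma tree_color_inj : injective tree_color.
Proof. by move=> a b /(congr1 val) eq_ab; apply: val_inj. Qed.

Lemma corona_color_proper : proper_coloring e corona_color.
Proof.
split.
  case=> [a|[a j]] [b|[b j']] //=; last by rewrite andbF.
  - by move=> tab; apply: contraTneq tab => /tree_color_inj ->; rewrite t_irr.
  - by move=> /eqP <-; exact: neq_lift.
  - by move=> /eqP <-; rewrite eq_sym; exact: neq_lift.
move=> i; case: (unliftP (tree_color a0) i) => [j ->|->].
  by exists (inr (a0, j)).
by exists (inl a0).
Qed.

Let card_gt1 : 1 < #|{: V}| := card_corona_gt1 a0 m_gt1.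
Local Notation code := (color_code e corona_color).

Lemma color_code_tree_le1 a l : code (inl a) l <= 1.
Proof.
rewrite leq_color_code //; apply/existsP.
case: (unliftP (tree_color a) l) => [j ->|->].
  by exists (inr (a, j)); rewrite ball1 /= !eqxx.
by exists (inl a); rewrite ball1 !eqxx.
Qed.

Lemma color_code_leaf_le1 a j l :
  (code (inr (a, j)) l <= 1) =
  (l == lift (tree_color a) j) || (l == tree_color a).
Proof.
rewrite leq_color_code //; apply/existsP/orP => [[y]|[] /eqP ->].
- by rewrite ball1 corona_edge_leafl => /andP[/orP[] /eqP -> /eqP <-]; [left|right].
- by exists (inr (a, j)); rewrite ball1 !eqxx.
- by exists (inl a); rewrite ball1 corona_edge_leafl !eqxx orbT.
Qed.

Lemma corona_color_locating : locating_coloring e corona_color.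
Proof.
split; first exact: corona_color_proper.
have leq_code x y : (forall i, code x i = code y i) ->
    forall k i, (code x i <= k) = (code y i <= k) by move=> xy k i; rewrite xy.
case=> [a|[a j]] [b|[b j']] /leq_code xy.
- move: (xy 0 (tree_color a)); rewrite !color_code_le0 eqxx eq_sym.
  by move=> /esym /eqP /tree_color_inj ->.
- have [l /andP[l1 l2]] := exists_ord_neq2 (lift (tree_color b) j') (tree_color b) m_gt1.
  move: (xy 1 l); rewrite color_code_tree_le1 color_code_leaf_le1.
  by rewrite (negbTE l1) (negbTE l2).
- have [l /andP[l1 l2]] := exists_ord_neq2 (lift (tree_color a) j) (tree_color a) m_gt1.
  move: (xy 1 l); rewrite color_code_tree_le1 color_code_leaf_le1.
  by rewrite (negbTE l1) (negbTE l2).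
- move: (xy 0 (lift (tree_color a) j)); rewrite !color_code_le0 eqxx => /esym /eqP /= colj.
  move: (xy 1 (tree_color a)); rewrite !color_code_leaf_le1 eqxx orbT colj.
  rewrite (negbTE (neq_lift _ _)) /= => /esym /eqP /tree_color_inj eq_ab.
  by move: colj; rewrite eq_ab => /lift_inj ->.
Qed.
End Coloring.
End Corona.

Theorem theorem6 (m n : nat) (t : rel 'I_n) :
  2 <= m -> 2 <= n -> n <= m.+1 -> is_tree t ->
  locating_chromatic_number_is (corona t (@edgeless m)) m.+1.
Proof.
move=> m_gt1 n_gt1 n_le [[_ t_irr] _].
have a0 : 'I_n := Ordinal (ltnW n_gt1).
split; first by exists (corona_color n_le); exact: corona_color_locating.
by move=> k [c loc]; exact: locating_corona_ge loc.
Qed.
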